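(* Let $d,b,n$ be positive integers and $R_0(t)=\prod_{-n\le l\le n}(t-dl)$. For a polynomial $q$ put $p(t)=q(t)/R_0(t)$ and $p_k=(p(t)(t-dk))|_{t=dk}$ for $-n\le k\le n$. Then in each of the following cases $\deg q\le 2n$, every $p_k$ is an integer, and $|p_k|\le C$: (i) $q(t)=d^{2n}\prod_{(d+2(i-1))n<l\le(d+2i)n}(t-l)$ with $1\le i\le b$, and $C=\frac{1}{(n!)^2}\prod_{(2d+2(i-1))n<l\le(2d+2i)n}l$; (ii) $q(t)=d^{2n}\prod_{(d+2(i-1))n<l\le(d+2i)n}(t+l)$ with $1\le i\le b$, and the same $C$ as in (i); (iii) $q(t)=d^{2n}(2n)!$ and $C=\frac{(2n)!}{(n!)^2}$.
   Context: All products are over integers $l$ in the indicated ranges. *)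

From HB Require Import structures.
From mathcomp Require Import all_boot all_order all_algebra.
Set Implicit Arguments. Unset Strict Implicit. Unset Printing Implicit Defensive.
Import Order.TTheory GRing.Theory Num.Theory.
Local Open Scope ring_scope.

(* The nodes d*l for -n <= l <= n, indexed by j in [0, 2n], l = j - n. *)
Definition node (d n j : nat) : rat := ((d%:Z * (j%:Z - n%:Z))%R)%:~R.

Definition R0 (d n : nat) : {poly rat} :=
  \prod_(0 <= j < (2 * n).+1) ('X - (node d n j)%:P).

(* p_k = (q(t)/R_0(t) * (t - dk))|_{t = dk}
       = q(dk) / prod_{-n<=l<=n, l<>k} (dk - dl), for -n <= k <= n. *)
Definition pk (d n : nat) (q : {poly rat}) (k : int) : rat :=
  q.[(d%:Z * k)%:~R] /
  \prod_(0 <= j < (2 * n).+1 | (j%:Z - n%:Z)%R != k)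
     ((d%:Z * k)%:~R - node d n j).

Definition q1 (d n i : nat) : {poly rat} :=
  (d%:R ^+ (2 * n))%:P *
  \prod_(((d + 2 * (i - 1)) * n).+1 <= l < ((d + 2 * i) * n).+1) ('X - (l%:R)%:P).

Definition q2 (d n i : nat) : {poly rat} :=
  (d%:R ^+ (2 * n))%:P *
  \prod_(((d + 2 * (i - 1)) * n).+1 <= l < ((d + 2 * i) * n).+1) ('X + (l%:R)%:P).

Definition q3 (d n : nat) : {poly rat} := ((d%:R ^+ (2 * n)) * ((2 * n)`!)%:R)%:P.

Definition C12 (d n i : nat) : rat :=
  (\prod_(((2 * d + 2 * (i - 1)) * n).+1 <= l < ((2 * d + 2 * i) * n).+1) (l%:R : rat))
  / ((n`!)%:R ^+ 2).

Definition C3 (n : nat) : rat := ((2 * n)`!)%:R / ((n`!)%:R ^+ 2).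

Definition good (d n : nat) (q : {poly rat}) (C : rat) : Prop :=
  (size q <= (2 * n).+1)%N /\
  forall k : int, (- n%:Z <= k <= n%:Z)%R ->
    (exists z : int, pk d n q k = z%:~R) /\ `|pk d n q k| <= C.

(* Write the node as d k with k = m - n, 0 <= m <= 2n.  The denominator of p_k,
   prod_{j <> m} d (m - j), has absolute value d^(2n) m! (2n-m)!.  In each case q(dk)
   is, up to sign, d^(2n) times a product (s+1)(s+2)...(s+2n) = (s+2n)^_(2n) of 2n
   consecutive integers, with s <= B := (2d+2(i-1))n in cases (i)-(ii) and s = B = 0
   in case (iii).  Since (s+2n)^_(2n) = C(s+2n,2n) (2n)!, this gives
   |p_k| = C(s+2n,2n) C(2n,m) <= C(B+2n,2n) C(2n,n) = (B+2n)^_(2n) / (n!)^2. *)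

From HB Require Import structures.
From mathcomp Require Import all_boot all_order all_algebra zify ring.
Import Order.TTheory GRing.Theory Num.Theory.
Set Implicit Arguments. Unset Strict Implicit. Unset Printing Implicit Defensive.

Lemma prod_nat_ffact s r : (\prod_(s.+1 <= l < (s + r).+1) l = (s + r) ^_ r)%N.
Proof.
apply/eqP; rewrite -(@eqn_pmul2l s`!) ?fact_gt0 // -fact_split ?leq_addr //.
by rewrite -bin_ffact -(bin_fact (leq_addl s r)) addnK mulnA mulnC.
Qed.

Lemma prod_nat_shift a s r (F : nat -> nat) :
  (forall l, a < l <= a + r -> F l = l - a + s)%N ->
  (\prod_(a.+1 <= l < (a + r).+1) F l = \prod_(s.+1 <= l < (s + r).+1) l)%N.
Proof.
move=> hF; transitivity (\prod_(a.+1 <= l < (a + r).+1) (l - a + s))%N.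
  by apply: eq_big_nat => l; apply: hF.
rewrite -[a.+1]add1n -[s.+1]add1n !big_addn -!addnS !addKn.
by under eq_bigr do rewrite addnK.
Qed.

Lemma ffact_bin_split s N m : (m <= N ->
  (s + N) ^_ N = 'C(s + N, N) * 'C(N, m) * (m`! * (N - m)`!))%N.
Proof. by move=> hm; rewrite -mulnA bin_fact // bin_ffact. Qed.

Lemma bin_le_central n m : (m <= 2 * n -> 'C(2 * n, m) <= 'C(2 * n, n))%N.
Proof.
have bin_up k : (2 * k < 2 * n -> 'C(2 * n, k) <= 'C(2 * n, k.+1))%N.
  move=> hk; rewrite -(leq_pmul2l (ltn0Sn k)) mul_bin_left leq_mul2r.
  by apply/orP; right; lia.
have below k : (k <= n -> 'C(2 * n, k) <= 'C(2 * n, n))%N.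
  move=> hk; rewrite -(subKn hk); elim: (n - k) (leq_subr k n) => [|j IH] hj.
    by rewrite subn0.
  apply: leq_trans (IH (ltnW hj)); rewrite subnS -[X in (_ <= 'C(_, X))%N](@prednK (n - j)).
    by apply: bin_up; lia.
  lia.
move=> hm; case: (leqP m n) => [|hnm]; first exact: below.
by rewrite -bin_sub // below //; lia.
Qed.

Lemma prod_dist_nodes c N m : (m <= N ->
  \prod_(0 <= j < N.+1 | j != m) (c * `|(m%:Z - j%:Z)%R|) = c ^ N * (m`! * (N - m)`!))%N.
Proof.
move=> /subnK <-; elim: (N - m) => [|k IH].
  rewrite add0n subnn fact0 muln1 big_mkcond big_nat_recr //= eqxx muln1.
  under eq_big_nat => j /andP[_ hj] do rewrite ifT ?neq_ltn ?hj //.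
  rewrite big_split prod_nat_const_nat subn0 /=; congr (_ * _).
  rewrite fact_prod big_add1 big_nat_rev /=; apply: eq_big_nat => j /andP[_ hj].
  lia.
rewrite addSn big_mkcond big_nat_recr //= -big_mkcond IH ifT; last lia.
have -> : `|(m%:Z - (k + m).+1%:Z)%R| = k.+1 by lia.
by rewrite addnK -addSn addnK factS expnS; ring.
Qed.

Local Open Scope ring_scope.

Lemma pk_node d n q (m : nat) : pk d n q (m%:Z - n%:Z) =
  q.[node d n m] / (\prod_(0 <= j < (2 * n).+1 | j != m) (d%:Z * (m%:Z - j%:Z)))%:~R.
Proof.
rewrite /pk rmorph_prod (eq_bigl (fun j : nat => j != m)) => [|j]; last first.
  by rewrite /= (inj_eq (addIr _)) eqz_nat.
by congr (_ / _); apply: eq_bigr => j _; rewrite /node -intrB -mulrBr opprB addrA subrK.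
Qed.

Definition node_value_ffact d n (q : {poly rat}) (m s : nat) : Prop :=
  exists Nz : int, q.[node d n m] = Nz%:~R /\
    `|Nz|%N = (d ^ (2 * n) * (s + 2 * n) ^_ (2 * n))%N.

Lemma pk_node_int d n q m s : (0 < d)%N -> (m <= 2 * n)%N ->
  node_value_ffact d n q m s ->
  exists2 z : int, pk d n q (m%:Z - n%:Z) = z%:~R &
    `|z|%N = ('C(s + 2 * n, 2 * n) * 'C(2 * n, m))%N.
Proof.
move=> hd hm [Nz [hq hN]]; rewrite pk_node hq.
set D := \prod_(_ <= j < _ | _) _.
have hD : `|D|%N = (d ^ (2 * n) * (m`! * (2 * n - m)`!))%N.
  rewrite -prod_dist_nodes // (@big_morph nat int absz 1%N muln 1 *%R abszM (erefl _)).
  by apply: eq_bigr => j _; rewrite abszM.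
have D0 : D != 0 by rewrite -absz_eq0 hD -lt0n !muln_gt0 expn_gt0 hd !fact_gt0.
have hNc : `|Nz|%N = (`|D| * ('C(s + 2 * n, 2 * n) * 'C(2 * n, m)))%N.
  by rewrite hN hD (@ffact_bin_split s _ _ hm); ring.
have hDNz : (D %| Nz)%Z by rewrite dvdzE hNc dvdn_mulr.
exists (Nz %/ D)%Z; first by rewrite -{1}(divzK hDNz) intrM mulfK // intr_eq0.
apply/eqP; rewrite -(@eqn_pmul2l `|D|) ?absz_gt0 // -hNc -abszM mulrC divzK //.
Qed.

Lemma node_index k n : - n%:Z <= k <= n%:Z ->
  exists2 m, (m <= 2 * n)%N & k = m%:Z - n%:Z.
Proof.
move=> /andP[hlo hhi]; exists (absz (k + n%:Z)); first by lia.
by rewrite gez0_abs ?addrK //; lia.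
Qed.

Lemma bin_mul_le_ffact_div n m s B : (m <= 2 * n)%N -> (s <= B)%N ->
  ('C(s + 2 * n, 2 * n) * 'C(2 * n, m))%N%:R <=
    ((B + 2 * n) ^_ (2 * n))%N%:R / (n`!%:R ^+ 2) :> rat.
Proof.
move=> hm hsB; have hn : (n <= 2 * n)%N by lia.
rewrite (@ffact_bin_split B _ _ hn) (_ : 2 * n - n = n)%N; last by lia.
rewrite expr2 -natrM [X in X / _]natrM mulfK; last by rewrite pnatr_eq0 -lt0n muln_gt0 fact_gt0.
by rewrite ler_nat leq_mul ?leq_bin2l ?leq_add2r ?bin_le_central.
Qed.

Lemma good_of_node_values d n (q : {poly rat}) B : (0 < d)%N -> (size q <= (2 * n).+1)%N ->
  (forall m, (m <= 2 * n)%N -> exists2 s, (s <= B)%N & node_value_ffact d n q m s) ->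
  good d n q (((B + 2 * n) ^_ (2 * n))%N%:R / (n`!%:R ^+ 2)).
Proof.
move=> hd hq hv; split=> // k /node_index[m hm ->].
have [s hsB /(pk_node_int hd hm)[z hz hzabs]] := hv m hm.
split; first by exists z.
by rewrite hz -intr_norm -abszE hzabs bin_mul_le_ffact_div.
Qed.

Lemma node_value_XsubC d n A m : (d * n <= A)%N -> (m <= 2 * n)%N ->
  node_value_ffact d n ((d%:R ^+ (2 * n))%:P *
    \prod_(A.+1 <= l < (A + 2 * n).+1) ('X - l%:R%:P)) m (A + d * n - d * m).
Proof.
move=> hA hm; have hdm : (d * m <= d * (2 * n))%N by rewrite leq_mul2l hm orbT.
exists (d%:Z ^+ (2 * n) * \prod_(A.+1 <= l < (A + 2 * n).+1) (d%:Z * (m%:Z - n%:Z) - l%:Z)).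
split.
  rewrite hornerM hornerC horner_prod rmorphM rmorphXn rmorph_prod /=.
  by congr (_ * _); apply: eq_bigr => l _; rewrite hornerXsubC intrB.
rewrite abszM abszX (@big_morph nat int absz 1%N muln 1 *%R abszM (erefl _)) /=.
by rewrite -prod_nat_ffact; congr (_ * _)%N; apply: prod_nat_shift => l hl; lia.
Qed.

Lemma node_value_XaddC d n A m : (d * n <= A)%N -> (m <= 2 * n)%N ->
  node_value_ffact d n ((d%:R ^+ (2 * n))%:P *
    \prod_(A.+1 <= l < (A + 2 * n).+1) ('X + l%:R%:P)) m (A + d * m - d * n).
Proof.
move=> hA hm.
exists (d%:Z ^+ (2 * n) * \prod_(A.+1 <= l < (A + 2 * n).+1) (d%:Z * (m%:Z - n%:Z) + l%:Z)).
split.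
  rewrite hornerM hornerC horner_prod rmorphM rmorphXn rmorph_prod /=.
  by congr (_ * _); apply: eq_bigr => l _; rewrite hornerD hornerX hornerC intrD.
rewrite abszM abszX (@big_morph nat int absz 1%N muln 1 *%R abszM (erefl _)) /=.
by rewrite -prod_nat_ffact; congr (_ * _)%N; apply: prod_nat_shift => l hl; lia.
Qed.

Lemma node_value_q3 d n m : node_value_ffact d n (q3 d n) m 0.
Proof.
exists (d ^ (2 * n) * (2 * n)`!)%N; rewrite hornerC add0n ffactnn absz_nat.
by rewrite -pmulrn natrM natrX.
Qed.

Lemma size_polyC_mul_prod_XsubC (c : rat) (I : Type) (r : seq I) (F : I -> rat) :
  (size (c%:P * \prod_(i <- r) ('X - (F i)%:P))%R <= (size r).+1)%N.
Proof.
by rewrite mul_polyC (leq_trans (size_scale_leq _ _)) // size_prod_XsubC.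
Qed.

Lemma size_polyC_mul_prod_XaddC (c : rat) (I : Type) (r : seq I) (F : I -> rat) :
  (size (c%:P * \prod_(i <- r) ('X + (F i)%:P))%R <= (size r).+1)%N.
Proof.
under eq_bigr do rewrite -[(F _)%:P]opprK -polyCN.
exact: size_polyC_mul_prod_XsubC.
Qed.

Theorem lemma3p2 (d b n : nat) (hd : (0 < d)%N) (hb : (0 < b)%N) (hn : (0 < n)%N) :
  (forall i : nat, (1 <= i <= b)%N ->
     good d n (q1 d n i) (C12 d n i) /\ good d n (q2 d n i) (C12 d n i)) /\
  good d n (q3 d n) (C3 n).
Proof.
split; last first.
  rewrite /C3 -ffactnn -[X in X ^_ _]add0n; apply: good_of_node_values => //.
    by rewrite (leq_trans (size_polyC_leq1 _)).
  by move=> m _; exists 0%N => //; apply: node_value_q3.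
move=> [//|i] _; set A := ((d + 2 * i) * n)%N.
have shift k : ((k + 2 * i.+1) * n = (k + 2 * i) * n + 2 * n)%N by ring.
rewrite /q1 /q2 /C12 subSS subn0 !shift -natr_prod prod_nat_ffact.
have hA : (d * n <= A)%N by rewrite leq_mul2r leq_addr orbT.
have hsize : (size (index_iota A.+1 (A + 2 * n).+1) = 2 * n)%N.
  by rewrite size_iota subSS addKn.
split; apply: good_of_node_values => //.
- by apply: leq_trans (size_polyC_mul_prod_XsubC _ _ _) _; rewrite hsize.
- move=> m hm; exists (A + d * n - d * m)%N; last exact: node_value_XsubC.
  by rewrite /A; nia.
- by apply: leq_trans (size_polyC_mul_prod_XaddC _ _ _) _; rewrite hsize.
- move=> m hm; exists (A + d * m - d * n)%N; last exact: node_value_XaddC.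
  by rewrite /A; nia.
Qed.
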